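(* Let $\Omega\subseteq\mathbb{R}^n$. If $\varphi\in\Phi_{\mathrm w}(\Omega)$ satisfies condition (A2), then so does its conjugate $\varphi^*$.
   Context: A function $f:[0,\infty)\to[0,\infty]$ is $a$-almost increasing ($a\ge1$) if $f(s)\le a f(t)$ for all $s\le t$. A function $\varphi:\Omega\times[0,\infty)\to[0,\infty]$ is a weak $\Phi$-function, $\varphi\in\Phi_{\mathrm w}(\Omega)$, if for a.e. $x\in\Omega$: $x\mapsto\varphi(x,|f(x)|)$ is measurable for every measurable $f:\Omega\to\mathbb{R}$; $t\mapsto\varphi(x,t)$ is increasing (non-decreasing); $\varphi(x,0)=\lim_{t\to0^+}\varphi(x,t)=0$ and $\lim_{t\to\infty}\varphi(x,t)=\infty$; and $t\mapsto\varphi(x,t)/t$ is $a$-almost increasing on $(0,\infty)$ with $a\ge1$ independent of $x$. The conjugate is $\varphi^*(x,t):=\sup\{st-\varphi(x,s):s\ge0\}$. For any $\psi:\Omega\times[0,\infty)\to[0,\infty]$ the left-inverse is $\psi^{-1}(x,\tau):=\inf\{t\ge0:\psi(x,t)\ge\tau\}$. Condition (A2) for $\psi$: for every $\sigma>0$ there exist $\beta\in(0,1]$ and $h\in L^1(\Omega)\cap L^\infty(\Omega)$, $h\ge0$, such that for a.e. $x,y\in\Omega$, $\beta\psi^{-1}(x,\tau)\le\psi^{-1}(y,\tau+h(x)+h(y))$ for all $\tau\in[0,\sigma]$. *)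

From HB Require Import structures.
From mathcomp Require Import all_boot all_order all_algebra.
From mathcomp Require Import all_classical all_reals all_analysis.
From mathcomp Require Import measurable_realfun lebesgue_integral.
Set Implicit Arguments. Unset Strict Implicit. Unset Printing Implicit Defensive.
Import Order.TTheory GRing.Theory Num.Theory.
Import numFieldNormedType.Exports.
Local Open Scope classical_set_scope.
Local Open Scope ring_scope.
Local Open Scope ereal_scope.

Section PhiDefs.
Context {R : realType} {d : measure_display} {T : measurableType d}.

Definition almost_increasing (a : R) (A : set R) (f : R -> \bar R) : Prop :=
  forall s t, A s -> A t -> (s <= t)%R -> f s <= a%:E * f t.

Definition weak_Phi (mu : {measure set T -> \bar R}) (Omega : set T)
    (phi : T -> R -> \bar R) : Prop :=
  (forall f : T -> R, measurable_fun Omega f ->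
     measurable_fun Omega ((fun x => phi x `|f x|%R) : T -> \bar R)) /\
  exists a : R, (1 <= a)%R /\
  {ae mu, forall x, Omega x ->
     (forall t, (0 <= t)%R -> 0 <= phi x t) /\
     (forall s t, (0 <= s)%R -> (s <= t)%R -> phi x s <= phi x t) /\
     phi x 0%R = 0 /\
     phi x t @[t --> 0%R^'+] --> 0 /\
     phi x t @[t --> +oo%R] --> +oo /\
     almost_increasing a `]0%R, +oo[ (fun t => phi x t * (t^-1)%:E)}.

Definition conjugate (phi : T -> R -> \bar R) : T -> R -> \bar R :=
  fun x t => ereal_sup [set (s * t)%:E - phi x s | s in `[0%R, +oo[].

Definition left_inverse (psi : T -> R -> \bar R) (x : T) (tau : R) : \bar R :=
  ereal_inf [set t%:E | t in [set t | (0 <= t)%R /\ tau%:E <= psi x t]].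

Definition L1_Linf_nonneg (mu : {measure set T -> \bar R}) (Omega : set T)
    (h : T -> R) : Prop :=
  (forall x, Omega x -> (0 <= h x)%R) /\
  measurable_fun Omega h /\
  mu.-integrable Omega (EFin \o h) /\
  exists M : R, {ae mu, forall x, Omega x -> (`|h x| <= M)%R}.

Definition A2 (mu : {measure set T -> \bar R}) (Omega : set T)
    (psi : T -> R -> \bar R) : Prop :=
  forall sigma : R, (0 < sigma)%R ->
  exists beta : R, (0 < beta)%R /\ (beta <= 1)%R /\
  exists h : T -> R, L1_Linf_nonneg mu Omega h /\
  exists N : set T, mu.-negligible N /\
  forall x y, Omega x -> Omega y -> ~ N x -> ~ N y ->
  forall tau : R, (0 <= tau)%R -> (tau <= sigma)%R ->
    beta%:E * left_inverse psi x tau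
      <= left_inverse psi y (tau + h x + h y)%R.

End PhiDefs.

From HB Require Import structures.
From mathcomp Require Import all_boot all_order all_algebra.
From mathcomp Require Import all_classical all_reals all_analysis.
From mathcomp Require Import measurable_realfun lebesgue_integral.
From mathcomp Require Import ring lra.
Set Implicit Arguments.
Unset Strict Implicit.
Unset Printing Implicit Defensive.
Import Order.TTheory GRing.Theory Num.Theory.
Local Open Scope classical_set_scope.
Local Open Scope ring_scope.

(* Fix x and write f = phi(x, .), f^-1 for its left inverse. Since f(t)/t is
   a-almost increasing, f^-1 is almost linear, tau f^-1(tau') <= a tau' f^-1(tau)
   for tau <= tau', and the left inverse of the conjugate is pinned down by f^-1:
   tau / (a f^-1(tau)) <= (f^* )^-1(tau) <= 2 tau / f^-1(tau).  Hence (A2) for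
   phi^* at the pair (x, y) reduces to (A2) for phi at the swapped pair (y, x).
   As h is essentially bounded by some M, the level tau + h(x) + h(y) is at most
   L = 1 + sigma + 2M, and dividing it by L brings it into [0, 1]: (A2) for phi
   with sigma = 1 suffices, at the price of the constant beta / (4 a^3 L). *)

Section left_inverse.
Variable R : realType.
Local Open Scope ereal_scope.
Implicit Types (f : R -> \bar R) (s t tau : R).

(* By conversion, [left_inverse psi x] is [linv (psi x)] and [conjugate phi x]
   is [fconj (phi x)]. *)
Definition linv f tau : \bar R :=
  ereal_inf [set t%:E | t in [set t | (0 <= t)%R /\ tau%:E <= f t]].

Definition fconj f t : \bar R :=
  ereal_sup [set (s * t)%:E - f s | s in `[0%R, +oo[].

Lemma linv_ge0 f tau : 0 <= linv f tau.
Proof. by apply/ereal_infP => _ [t [t0 _] <-]; rewrite lee_fin. Qed.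

Lemma linv_le f tau t : (0 <= t)%R -> tau%:E <= f t -> linv f tau <= t%:E.
Proof. by move=> t0 ft; apply: ereal_inf_lbound; exists t. Qed.

Lemma le_linv f tau1 tau2 : (tau1 <= tau2)%R -> linv f tau1 <= linv f tau2.
Proof.
move=> le12; apply: ereal_inf_le_tmp => _ [t [t0 ft] <-]; exists t => //.
by split=> //; apply: le_trans ft; rewrite lee_fin.
Qed.

Lemma linv0 f : 0 <= f 0%R -> linv f 0 = 0.
Proof. by move=> f0; apply/eqP; rewrite eq_le linv_ge0 andbT linv_le. Qed.

Lemma fconj_ge0 f t : f 0%R = 0 -> 0 <= fconj f t.
Proof.
move=> f0; apply: ereal_sup_ubound; exists 0%R.
  by rewrite /= in_itv /= lexx.
by rewrite mul0r f0 sube0.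
Qed.

Section left_inverse_of_fun.
Variables (a : R) (f : R -> \bar R).
Hypothesis a_ge1 : (1 <= a)%R.
Hypothesis f_ge0 : forall t, (0 <= t)%R -> 0 <= f t.
Hypothesis f_nd : forall s t, (0 <= s)%R -> (s <= t)%R -> f s <= f t.
Hypothesis f_cvg0 : f t @[t --> 0%R^'+] --> 0.
Hypothesis f_cvgy : f t @[t --> +oo%R] --> +oo.
Hypothesis f_aincr : almost_increasing a `]0%R, +oo[ (fun t => f t * (t^-1)%:E).

Lemma linv_lt_level tau t : linv f tau < t%:E -> tau%:E <= f t.
Proof.
case/ereal_inf_lt => _ [t' [t'0 ft'] <-]; rewrite lte_fin => t't.
by apply: (le_trans ft'); apply: f_nd => //; exact: ltW.
Qed.

Lemma linv_fin_num tau : linv f tau \is a fin_num.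
Proof.
have [t [t0 ft]] : exists t, (0 <= t)%R /\ tau%:E <= f t.
  apply: (@filter_ex _ (nbhs +oo%R)).
  by apply: filterI; [exact: nbhs_pinfty_ge | exact: cvgey_ge f_cvgy tau].
rewrite ge0_fin_numE ?linv_ge0//; apply: le_lt_trans (ltry t); exact: linv_le.
Qed.

Lemma linv_gt0 tau : (0 < tau)%R -> 0 < linv f tau.
Proof.
move=> tau0; rewrite lt_neqAle linv_ge0 andbT eq_sym; apply/negP => /eqP linv_eq0.
suff : tau%:E <= 0 by rewrite lee_fin leNgt tau0.
apply: cvge_to_ge f_cvg0 _; near=> t; apply: linv_lt_level.
by rewrite linv_eq0 lte_fin; near: t; exact: nbhs_right_gt.
Unshelve. all: by end_near.
Qed.

Lemma linv_real tau : (0 < tau)%R -> exists2 u, (0 < u)%R & linv f tau = u%:E.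
Proof.
move=> tau0; exists (fine (linv f tau)); last by rewrite fineK ?linv_fin_num.
by rewrite fine_gt0// linv_gt0//= -ge0_fin_numE ?linv_ge0 ?linv_fin_num.
Qed.

Let a_gt0 : (0 < a)%R. Proof. exact: lt_le_trans ltr01 a_ge1. Qed.

(* f t >= (t / (a t')) f t' >= (t / (a t')) tau, by almost increase of f(t)/t. *)
Lemma linv_lt_scaled_level tau t' t c : linv f tau < t'%:E -> (t' <= t)%R ->
  (c * (a * t') <= t * tau)%R -> c%:E <= f t.
Proof.
move=> lt_t' t't ct.
have t'0 : (0 < t')%R by rewrite -lte_fin (le_lt_trans (linv_ge0 f tau)).
have t0 : (0 < t)%R := lt_le_trans t'0 t't.
have tau_t' : (tau / t')%:E <= f t' * (t'^-1)%:E.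
  rewrite EFinM; apply: lee_wpmul2r; last exact: linv_lt_level.
  by rewrite lee_fin invr_ge0 ltW.
have aincr : f t' * (t'^-1)%:E <= a%:E * (f t * (t^-1)%:E).
  by apply: f_aincr => //=; rewrite in_itv /= andbT.
move: (f_ge0 (ltW t0)) aincr; case: (f t) => [r _ | _ _ | //]; last by rewrite leey.
rewrite -!EFinM => /(le_trans tau_t'); rewrite !lee_fin => tau_r.
have c_le : (c <= t / (a * t') * tau)%R.
  by rewrite mulrAC ler_pdivlMr ?mulr_gt0.
apply: le_trans c_le _.
have -> : (t / (a * t') * tau = t / a * (tau / t'))%R by field; rewrite ?gt_eqF.
have -> : r = (t / a * (a * (r * t^-1)))%R by field; rewrite ?gt_eqF.
by apply: ler_wpM2l => //; rewrite divr_ge0 ?ltW.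
Qed.

Lemma linv_scale tau tau' u : (0 < tau)%R -> (tau <= tau')%R ->
  linv f tau = u%:E -> linv f tau' <= (a * tau' / tau * u)%:E.
Proof.
move=> tau0 le_tau hu.
have tau'0 : (0 < tau')%R := lt_le_trans tau0 le_tau.
have u0 : (0 <= u)%R by rewrite -lee_fin -hu linv_ge0.
apply/lee_addgt0Pr => e e0; rewrite -EFinD.
set t := (_ + e)%R.
have t_tau : (t * tau = u * (a * tau') + e * tau)%R by rewrite /t; field; rewrite gt_eqF.
have t0 : (0 < t)%R by apply: ltr_pwDr e0 _; rewrite !mulr_ge0 // ?invr_ge0 ltW.
apply: linv_le; first exact: ltW.
apply: (@linv_lt_scaled_level tau (t * tau / (a * tau'))); first 1 last.
- rewrite ler_pdivrMr ?mulr_gt0 // ler_pM2l //.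
  by apply: le_trans le_tau _; rewrite ler_peMl // ltW.
- suff -> : (tau' * (a * (t * tau / (a * tau'))) = t * tau)%R by [].
  by field; rewrite ?gt_eqF.
by rewrite hu lte_fin ltr_pdivlMr ?mulr_gt0 // t_tau ltrDl mulr_gt0.
Qed.

Lemma fconj_le_linv tau u s : linv f tau = u%:E -> (0 <= s)%R ->
  (a * s * u < tau)%R -> fconj f s <= (s * u)%:E.
Proof.
move=> hu s0 lt_tau.
(* Beyond u, f t >= s t, so only t <= u contribute to the supremum. *)
have u0 : (0 <= u)%R by rewrite -lee_fin -hu linv_ge0.
apply/ereal_supP => _ [t /= + <-]; rewrite in_itv /= andbT => t0.
have [tu | ut] := leP t u.
  have := leeB (lexx (t * s)%:E) (f_ge0 t0); rewrite sube0 => /le_trans; apply.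
  by rewrite lee_fin mulrC ler_wpM2l.
suff ts_f : (t * s)%:E <= f t.
  by apply: (@le_trans _ _ 0); rewrite ?sube_le0 // lee_fin mulr_ge0.
have [-> | s_neq0] := eqVneq s 0%R; first by rewrite mulr0 f_ge0.
have s_gt0 : (0 < s)%R by rewrite lt_neqAle eq_sym s_neq0.
set t' := Num.min t (tau / (a * s))%R.
apply: (@linv_lt_scaled_level tau t').
- by rewrite hu lte_fin lt_min ut /= ltr_pdivlMr ?mulr_gt0 // mulrC.
- by rewrite ge_min lexx.
have t's : (a * s * t' <= tau)%R.
  by rewrite mulrC -ler_pdivlMr ?mulr_gt0 // ge_min lexx orbT.
by rewrite -mulrA [(s * _)%R]mulrA [(s * a)%R]mulrC ler_wpM2l.
Qed.

Lemma linv_fconj_ge tau u : (0 < u)%R -> linv f tau = u%:E ->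
  (tau / (a * u))%:E <= linv (fconj f) tau.
Proof.
move=> u0 hu; apply/ereal_infP => _ [s [s0 tau_le] <-]; rewrite lee_fin leNgt.
apply/negP; rewrite ltr_pdivlMr ?mulr_gt0 // mulrCA mulrA => lt_tau.
have := le_trans tau_le (fconj_le_linv hu s0 lt_tau); rewrite lee_fin leNgt.
move/negP; apply; apply: le_lt_trans lt_tau.
by rewrite -mulrA ler_peMl // mulr_ge0 // ltW.
Qed.

End left_inverse_of_fun.

Lemma linv_fconj_le f tau u : (forall t, (0 <= t)%R -> 0 <= f t) ->
  (0 < tau)%R -> (0 < u)%R -> linv f tau = u%:E ->
  linv (fconj f) tau <= (2 * tau / u)%:E.
Proof.
move=> f_ge0 tau0 u0 hu; apply/lee_addgt0Pr => e e0; rewrite -EFinD.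
set s := (_ + e)%R.
have s0 : (0 < s)%R by apply: ltr_pwDr e0 _; rewrite !mulr_ge0 // ?invr_ge0 ltW.
apply: linv_le; first exact: ltW.
(* Test the supremum at t = 2 tau / s < u, where f t < tau. *)
set t := (2 * tau / s)%R.
have t0 : (0 <= t)%R by rewrite /t divr_ge0 ?mulr_ge0 ?ltW.
have t_lt_u : (t < u)%R.
  by rewrite /t ltr_pdivrMr // [(u * s)%R]mulrC -ltr_pdivrMr // /s ltrDl.
have ft_lt : f t < tau%:E.
  rewrite ltNge; apply/negP => /(linv_le t0).
  by rewrite hu lee_fin leNgt t_lt_u.
apply: le_trans (_ : (t * s)%:E - f t <= _); last first.
  by apply: ereal_sup_ubound; exists t; rewrite //= in_itv /= t0.
have -> : (t * s = 2 * tau)%R by rewrite /t; field; rewrite gt_eqF.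
move: ft_lt (f_ge0 _ t0); case: (f t) => [r | // | //].
by rewrite -EFinB !lte_fin !lee_fin; lra.
Qed.

Definition weak_Phi_fun (a : R) f : Prop :=
  (forall t, (0 <= t)%R -> 0 <= f t) /\
  (forall s t, (0 <= s)%R -> (s <= t)%R -> f s <= f t) /\
  f 0%R = 0 /\
  f t @[t --> 0%R^'+] --> 0 /\
  f t @[t --> +oo%R] --> +oo /\
  almost_increasing a `]0%R, +oo[ (fun t => f t * (t^-1)%:E).

Section A2_transfer.
Variables (a : R) (f g : R -> \bar R).
Hypotheses (a_ge1 : (1 <= a)%R) (fP : weak_Phi_fun a f) (gP : weak_Phi_fun a g).

Lemma linv_A2_swapped_bound beta L hx hy tau ux uy :
  (0 <= beta)%R -> (1 <= L)%R -> (0 <= hx)%R -> (0 <= hy)%R -> (0 < tau)%R ->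
  (tau + hx + hy <= L)%R ->
  beta%:E * linv g ((tau + hx + hy) / L) <= linv f ((tau + hx + hy) / L + hy + hx) ->
  linv f tau = ux%:E -> linv g (tau + hx + hy) = uy%:E ->
  (beta * tau * uy <= 2 * a ^+ 2 * L * (tau + hx + hy) * ux)%R.
Proof.
set s := (tau + hx + hy)%R => beta0 L1 hx0 hy0 tau0 s_le_L A2_swapped hux huy.
have [f_ge0 [f_nd [_ [_ [_ f_aincr]]]]] := fP.
have [g_ge0 [g_nd [_ [g_cvg0 [g_cvgy g_aincr]]]]] := gP.
have a0 : (0 < a)%R := lt_le_trans ltr01 a_ge1.
have L0 : (0 < L)%R := lt_le_trans ltr01 L1.
have s0 : (0 < s)%R by rewrite /s; lra.
have t0_gt0 : (0 < s / L)%R by rewrite divr_gt0.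
have t0_le_s : (s / L <= s)%R by rewrite ler_pdivrMr // ler_peMr // ltW.
have [v v0 hv] := linv_real g_nd g_cvg0 g_cvgy t0_gt0.
have uy_le : (uy <= a * L * v)%R.
  have s_t0 : (a * s / (s / L) = a * L)%R by field; rewrite ?gt_eqF.
  have := linv_scale a_ge1 g_ge0 g_nd g_aincr t0_gt0 t0_le_s hv.
  by rewrite huy lee_fin s_t0.
have beta_v : (beta * v <= a * (2 * s) / tau * ux)%R.
  rewrite -lee_fin EFinM -hv (le_trans A2_swapped) //.
  apply: le_trans (linv_scale a_ge1 f_ge0 f_nd f_aincr tau0 _ hux).
    by apply: le_linv; rewrite /s in t0_le_s *; lra.
  by rewrite /s; lra.
apply: le_trans (_ : beta * tau * (a * L * v) <= _)%R.
  by rewrite ler_wpM2l // mulr_ge0 // ltW.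
rewrite (_ : beta * tau * (a * L * v) = tau * a * L * (beta * v))%R; last by ring.
have -> : (2 * a ^+ 2 * L * s * ux = tau * a * L * (a * (2 * s) / tau * ux))%R.
  by field; rewrite gt_eqF.
by rewrite ler_wpM2l // !mulr_ge0 // ltW.
Qed.

Lemma linv_fconj_A2 beta L hx hy tau :
  (0 <= beta)%R -> (1 <= L)%R -> (0 <= hx)%R -> (0 <= hy)%R -> (0 <= tau)%R ->
  (tau + hx + hy <= L)%R ->
  beta%:E * linv g ((tau + hx + hy) / L) <= linv f ((tau + hx + hy) / L + hy + hx) ->
  (beta / (4 * a ^+ 3 * L))%:E * linv (fconj f) tau <= linv (fconj g) (tau + hx + hy).
Proof.
move=> beta0 L1 hx0 hy0 + s_le_L A2_swapped.
have [f_ge0 [f_nd [f0 [f_cvg0 [f_cvgy _]]]]] := fP.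
have [g_ge0 [g_nd [_ [g_cvg0 [g_cvgy g_aincr]]]]] := gP.
have a0 : (0 < a)%R := lt_le_trans ltr01 a_ge1.
have L0 : (0 < L)%R := lt_le_trans ltr01 L1.
have beta'_ge0 : 0 <= (beta / (4 * a ^+ 3 * L))%:E.
  by rewrite lee_fin divr_ge0 // !mulr_ge0 ?exprn_ge0 // ltW.
rewrite le_eqVlt => /predU1P[<- | tau0].
  by rewrite linv0 ?fconj_ge0 // mule0 linv_ge0.
have s0 : (0 < tau + hx + hy)%R by lra.
have [ux ux0 hux] := linv_real f_nd f_cvg0 f_cvgy tau0.
have [uy uy0 huy] := linv_real g_nd g_cvg0 g_cvgy s0.
have bound := linv_A2_swapped_bound beta0 L1 hx0 hy0 tau0 s_le_L A2_swapped hux huy.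
apply: le_trans (lee_wpmul2l beta'_ge0 (linv_fconj_le f_ge0 tau0 ux0 hux)) _.
rewrite -EFinM; apply: le_trans (linv_fconj_ge a_ge1 g_ge0 g_nd g_aincr uy0 huy).
rewrite lee_fin.
set Q := ((2 * a ^+ 3 * L * ux * uy)^-1)%R.
have Q_ge0 : (0 <= Q)%R by rewrite invr_ge0 !mulr_ge0 ?exprn_ge0 // ltW.
rewrite (_ : beta / (4 * a ^+ 3 * L) * (2 * tau / ux) =
             beta * tau * uy * Q)%R; last first.
  by rewrite /Q; field; rewrite ?gt_eqF.
rewrite (_ : (tau + hx + hy) / (a * uy) =
             2 * a ^+ 2 * L * (tau + hx + hy) * ux * Q)%R; last first.
  by rewrite /Q; field; rewrite ?gt_eqF.
by rewrite ler_wpM2r.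
Qed.

End A2_transfer.
End left_inverse.

Lemma L1_Linf_nonneg_ae_bounded {R : realType} {d : measure_display}
    {T : measurableType d} (mu : {measure set T -> \bar R}) (Omega : set T)
    (h : T -> R) :
  L1_Linf_nonneg mu Omega h ->
  exists2 M : R, 0 <= M & {ae mu, forall x, Omega x -> 0 <= h x <= M}.
Proof.
move=> [h_ge0 [_ [_ [M hM]]]]; exists (Num.max M 0); first by rewrite le_max lexx orbT.
apply: filterS hM => x hxM Ox; rewrite h_ge0 //=.
by rewrite le_max (le_trans (ler_norm _) (hxM Ox)).
Qed.

Theorem lemma2p4 (R : realType) (d : measure_display) (T : measurableType d)
  (mu : {measure set T -> \bar R}) (Omega : set T) (phi : T -> R -> \bar R) :
  measurable Omega ->
  weak_Phi mu Omega phi -> A2 mu Omega phi -> A2 mu Omega (conjugate phi).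
Proof.
move=> _ [_ [a [a_ge1 ae_phi]]] A2phi sigma sigma0.
have [beta [beta0 [beta_le1 [h [hL [N [N0 A2N]]]]]]] := A2phi 1 ltr01.
have [M M0 ae_h] := L1_Linf_nonneg_ae_bounded hL.
set L := 1 + sigma + 2 * M.
have L_ge1 : 1 <= L by rewrite /L; lra.
have L0 : 0 < L by lra.
have a3L_ge1 : 1 <= 4 * a ^+ 3 * L.
  by rewrite !mulr_ege1 ?exprn_ege1 // ler1n.
exists (beta / (4 * a ^+ 3 * L)); split; first by rewrite divr_gt0 // (lt_le_trans ltr01).
split; first by rewrite ler_pdivrMr ?(lt_le_trans ltr01) // mul1r (le_trans beta_le1).
exists h; split=> //.
set good := fun x => Omega x -> weak_Phi_fun a (phi x) /\ 0 <= h x <= M.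
exists (N `|` ~` good); split.
  apply: negligibleU N0 _; apply: filterS2 ae_phi ae_h => x phix hx Ox.
  by split; [exact: phix | exact: hx].
move=> x y Ox Oy /not_orP[Nx /contrapT/(_ Ox)[phix /andP[hx0 hxM]]].
move=> /not_orP[Ny /contrapT/(_ Oy)[phiy /andP[hy0 hyM]]] tau tau0 tau_le.
have s_le_L : tau + h x + h y <= L by rewrite /L; lra.
apply: (linv_fconj_A2 a_ge1 phix phiy (ltW beta0) L_ge1 hx0 hy0 tau0 s_le_L).
apply: A2N => //; first by apply: divr_ge0; lra.
by rewrite ler_pdivrMr // mul1r.
Qed.
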